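(* For arbitrary probability distributions $P,Q$ on a common countable set with finite entropies, $$H\!\left(\frac{P+Q}{2}\right)-\frac{H(P)+H(Q)}{2}\ \ge\ d\!\left(\frac{1-d_{\mathrm{TV}}(P,Q)}{2}\,\Big\|\,\frac12\right),$$ and this lower bound is tight: for every $\varepsilon\in[0,1]$ there exist $P,Q$ with $d_{\mathrm{TV}}(P,Q)=\varepsilon$ attaining equality.
   Context: $H(P)=-\sum_x P(x)\log P(x)$ is the Shannon entropy; $d_{\mathrm{TV}}(P,Q)=\frac12\sum_x |P(x)-Q(x)|$; for $p,q\in[0,1]$, $d(p\|q)=p\log\frac pq+(1-p)\log\frac{1-p}{1-q}$ with $0\log0=0$. Logarithms are natural. *)

From Stdlib Require Import Reals Lra.
Open Scope R_scope.

(* Probability distribution on the countable set nat (any countable set,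
   finite or infinite, can be relabelled into nat, padding with zeros). *)
Definition is_distribution (P : nat -> R) : Prop :=
  (forall x, 0 <= P x) /\ infinite_sum P 1.

Definition xlogxy (x y : R) : R := if Req_EM_T x 0 then 0 else x * ln (x / y).

Definition negxlogx (x : R) : R := if Req_EM_T x 0 then 0 else - (x * ln x).

(* Shannon entropy (natural log): H(P) = h, the series converges
   (finite entropy). *)
Definition entropy_is (P : nat -> R) (h : R) : Prop :=
  infinite_sum (fun x => negxlogx (P x)) h.

Definition tv_is (P Q : nat -> R) (t : R) : Prop :=
  infinite_sum (fun x => Rabs (P x - Q x) / 2) t.

Definition bin_kl (p q : R) : R := xlogxy p q + xlogxy (1 - p) (1 - q).

Definition mixture (P Q : nat -> R) : nat -> R := fun x => (P x + Q x) / 2.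

(* Write eta x = - x ln x, s = (p + q)/2, and let t be the total variation
   distance.  The Jensen-Shannon divergence is the sum over x of the
   nonnegative terms j(p, q) = eta(s) - (eta p + eta q)/2.  For q <= p, two
   applications of Gibbs' inequality y ln y >= y ln z + y - z, with
   z = s(1+t) for p and z = s(1-t) for q, give
     j(p, q) >= p/2 ln(1+t) + q/2 ln(1-t).
   Summing, with max(p,q) = s + |p-q|/2 and min(p,q) = s - |p-q|/2 summing to
   1 + t and 1 - t, yields exactly d((1-t)/2 || 1/2).  When t = 1 the minima
   all vanish, so the meaningless factor ln(1-t) is only ever multiplied by 0.
   Equality holds for the two-point distributions ((1+e)/2, (1-e)/2) and
   ((1-e)/2, (1+e)/2). *)

From Stdlib Require Import Reals Lra Lia.
From Coquelicot Require Import Coquelicot.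
Open Scope R_scope.

Lemma infinite_sum_lincomb (a b c : nat -> R) (la lb x y : R) :
  infinite_sum a la -> infinite_sum b lb ->
  (forall n, c n = x * a n + y * b n) ->
  infinite_sum c (x * la + y * lb).
Proof.
  intros Ha Hb Hc. apply is_series_Reals.
  apply is_series_Reals in Ha, Hb.
  apply (is_series_ext (fun n => plus (scal x (a n)) (scal y (b n)))).
  - intros n. now rewrite Hc.
  - exact (is_series_plus _ _ _ _ (is_series_scal_l x a la Ha)
             (is_series_scal_l y b lb Hb)).
Qed.

Lemma infinite_sum_scal (a : nat -> R) (l x : R) :
  infinite_sum a l -> infinite_sum (fun n => x * a n) (x * l).
Proof.
  intros Ha. replace (x * l) with (x * l + 0 * l) by ring.
  apply (infinite_sum_lincomb a a); auto. intros n. ring.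
Qed.

Lemma infinite_sum_comparison (a b : nat -> R) (lb : R) :
  (forall n, 0 <= a n <= b n) -> infinite_sum b lb -> exists la, infinite_sum a la.
Proof.
  intros Hab Hb. destruct (Rseries_CV_comp a b Hab (exist _ lb Hb)) as [la Ha].
  now exists la.
Qed.

Lemma infinite_sum_le (a b : nat -> R) (la lb : R) :
  (forall n, a n <= b n) -> infinite_sum a la -> infinite_sum b lb -> la <= lb.
Proof.
  intros Hab. apply Rle_cv_lim. intros n. apply sum_Rle. intros k _. apply Hab.
Qed.

Lemma infinite_sum_term_le (a : nat -> R) (l : R) (n : nat) :
  (forall k, 0 <= a k) -> infinite_sum a l -> a n <= l.
Proof.
  intros Ha Hl. apply Rle_trans with (sum_f_R0 a n); [|exact (sum_incr a n l Hl Ha)].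
  destruct n as [|n]; simpl; [lra|].
  pose proof (cond_pos_sum a n Ha). lra.
Qed.

Lemma infinite_sum_nonneg_eq0 (a : nat -> R) :
  (forall n, 0 <= a n) -> infinite_sum a 0 -> forall n, a n = 0.
Proof.
  intros Ha H0 n. pose proof (infinite_sum_term_le a 0 n Ha H0). specialize (Ha n). lra.
Qed.

Lemma infinite_sum_support2 (a : nat -> R) (l : R) :
  (forall n, (2 <= n)%nat -> a n = 0) -> a 0%nat + a 1%nat = l -> infinite_sum a l.
Proof.
  intros Ha Hl eps Heps. exists 1%nat. intros n Hn.
  replace (sum_f_R0 a n) with l.
  - unfold Rdist. rewrite Rminus_diag, Rabs_R0. lra.
  - induction n as [|[|n] IH]; [lia|simpl; lra|].
    simpl in *. rewrite <- IH, Ha by lia. ring.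
Qed.

Lemma negxlogx_eq (x : R) : negxlogx x = - (x * ln x).
Proof. unfold negxlogx. destruct (Req_EM_T x 0) as [->|_]; ring. Qed.

Lemma xlogxy_eq (x y : R) : xlogxy x y = x * ln (x / y).
Proof. unfold xlogxy. destruct (Req_EM_T x 0) as [->|_]; ring. Qed.

Lemma bin_kl_half (t : R) :
  bin_kl ((1 - t) / 2) (1 / 2) = (1 + t) / 2 * ln (1 + t) + (1 - t) / 2 * ln (1 - t).
Proof.
  unfold bin_kl. rewrite !xlogxy_eq.
  replace ((1 - t) / 2 / (1 / 2)) with (1 - t) by field.
  replace ((1 - (1 - t) / 2) / (1 - 1 / 2)) with (1 + t) by field.
  replace (1 - (1 - t) / 2) with ((1 + t) / 2) by field. ring.
Qed.

Lemma mul_ln_double (x : R) : 0 <= x -> x * ln (2 * x) = x * ln 2 + x * ln x.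
Proof.
  intros Hx. destruct (Req_dec x 0) as [->|Hx0]; [ring|].
  rewrite ln_mult by lra. ring.
Qed.

Lemma xlnx_gibbs (x y : R) : 0 <= x -> 0 < y -> x - y <= x * ln x - x * ln y.
Proof.
  intros Hx Hy. destruct (Req_dec x 0) as [->|Hx0]; [lra|].
  pose proof (exp_ineq1_le (ln (y / x))) as Hexp.
  rewrite exp_ln in Hexp by (apply Rdiv_lt_0_compat; lra).
  rewrite ln_div in Hexp by lra.
  apply Rmult_le_compat_l with (r := x) in Hexp; [|lra].
  replace (x * (y / x)) with y in Hexp by (field; lra). nra.
Qed.

Lemma xlnx_le (x y : R) : 0 <= x <= y -> x * ln x <= x * ln y.
Proof.
  intros Hxy. destruct (Req_dec x 0) as [->|Hx0]; [lra|].
  apply Rmult_le_compat_l; [lra|]. apply ln_le; lra.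
Qed.

Definition js_term (p q : R) : R := negxlogx ((p + q) / 2) - (negxlogx p + negxlogx q) / 2.

Lemma js_termC (p q : R) : js_term p q = js_term q p.
Proof. unfold js_term. rewrite (Rplus_comm q p). field. Qed.

Lemma js_term_le (p q : R) : 0 <= p -> 0 <= q -> js_term p q <= (p + q) / 2 * ln 2.
Proof.
  intros Hp Hq. unfold js_term. rewrite !negxlogx_eq.
  pose proof (xlnx_le p (p + q) ltac:(lra)).
  pose proof (xlnx_le q (p + q) ltac:(lra)).
  pose proof (mul_ln_double ((p + q) / 2) ltac:(lra)) as Hd.
  replace (2 * ((p + q) / 2)) with (p + q) in Hd by field. lra.
Qed.

Lemma js_term_ge_ord (p q t : R) :
  0 <= q <= p -> 0 <= t <= 1 -> t < 1 \/ q = 0 ->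
  p / 2 * ln (1 + t) + q / 2 * ln (1 - t) <= js_term p q.
Proof.
  intros Hqp Ht Htq. unfold js_term. rewrite !negxlogx_eq.
  destruct (Req_dec p 0) as [->|Hp0].
  { replace q with 0 by lra. lra. }
  set (s := (p + q) / 2).
  assert (Hs : 0 < s) by (unfold s; lra).
  assert (Hgp : p - s * (1 + t) <= p * ln p - p * (ln s + ln (1 + t))).
  { rewrite <- ln_mult by lra. apply xlnx_gibbs; nra. }
  assert (Hgq : q - s * (1 - t) <= q * ln q - q * (ln s + ln (1 - t))).
  { destruct Htq as [Ht1| ->]; [|nra].
    rewrite <- ln_mult by lra. apply xlnx_gibbs; nra. }
  unfold s in *. lra.
Qed.

(* [(p + q) / 2 +- Rabs (p - q) / 2] are [max p q] and [min p q]. *)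
Lemma js_term_ge (p q t : R) :
  0 <= p -> 0 <= q -> 0 <= t <= 1 ->
  t < 1 \/ (p + q) / 2 - Rabs (p - q) / 2 = 0 ->
  ((p + q) / 2 + Rabs (p - q) / 2) / 2 * ln (1 + t)
    + ((p + q) / 2 - Rabs (p - q) / 2) / 2 * ln (1 - t) <= js_term p q.
Proof.
  intros Hp Hq Ht Htq. unfold Rabs in *. destruct (Rcase_abs (p - q)).
  - rewrite js_termC.
    replace ((p + q) / 2 + - (p - q) / 2) with q in * by field.
    replace ((p + q) / 2 - - (p - q) / 2) with p in * by field.
    apply js_term_ge_ord; lra.
  - replace ((p + q) / 2 + (p - q) / 2) with p in * by field.
    replace ((p + q) / 2 - (p - q) / 2) with q in * by field.
    apply js_term_ge_ord; lra.
Qed.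

Lemma js_term_ge0 (p q : R) : 0 <= p -> 0 <= q -> 0 <= js_term p q.
Proof.
  intros Hp Hq. pose proof (js_term_ge p q 0 Hp Hq ltac:(lra) ltac:(lra)) as H.
  rewrite Rplus_0_r, Rminus_0_r, ln_1 in H. lra.
Qed.

Section Mixture.

Variables P Q : nat -> R.
Hypothesis HP : is_distribution P.
Hypothesis HQ : is_distribution Q.

Let tv_term (n : nat) : R := Rabs (P n - Q n) / 2.
Let js (n : nat) : R := js_term (P n) (Q n).

Lemma mixture_distribution_sum : infinite_sum (mixture P Q) 1.
Proof.
  replace 1 with (/ 2 * 1 + / 2 * 1) by field.
  apply (infinite_sum_lincomb P Q); [apply HP|apply HQ|].
  intros n. unfold mixture. field.
Qed.

Lemma tv_term_bounds (n : nat) : 0 <= tv_term n <= mixture P Q n.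
Proof.
  unfold tv_term, mixture. pose proof (proj1 HP n). pose proof (proj1 HQ n).
  unfold Rabs. destruct (Rcase_abs (P n - Q n)); lra.
Qed.

Lemma tv_is_exists : exists t, tv_is P Q t.
Proof. exact (infinite_sum_comparison _ _ _ tv_term_bounds mixture_distribution_sum). Qed.

Lemma tv_is_bounds (t : R) : tv_is P Q t -> 0 <= t <= 1.
Proof.
  intros Ht. split.
  - apply Rle_trans with (tv_term 0%nat); [apply tv_term_bounds|].
    apply (infinite_sum_term_le tv_term); [|exact Ht]. intros n. apply tv_term_bounds.
  - apply (infinite_sum_le tv_term (mixture P Q)); [|exact Ht|].
    + intros n. apply tv_term_bounds.
    + exact mixture_distribution_sum.
Qed.

Lemma js_sum_exists : exists j, infinite_sum js j.
Proof.
  apply (infinite_sum_comparison js (fun n => ln 2 * mixture P Q n) (ln 2 * 1)).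
  - intros n. unfold js, mixture.
    pose proof (js_term_ge0 (P n) (Q n) (proj1 HP n) (proj1 HQ n)).
    pose proof (js_term_le (P n) (Q n) (proj1 HP n) (proj1 HQ n)). lra.
  - exact (infinite_sum_scal _ _ _ mixture_distribution_sum).
Qed.

Lemma mixture_entropy_is (hP hQ j : R) :
  entropy_is P hP -> entropy_is Q hQ -> infinite_sum js j ->
  entropy_is (mixture P Q) (j + (hP + hQ) / 2).
Proof.
  intros HhP HhQ Hj.
  replace (j + (hP + hQ) / 2) with (1 * j + 1 * (/ 2 * hP + / 2 * hQ)) by field.
  apply (infinite_sum_lincomb js (fun n => / 2 * negxlogx (P n) + / 2 * negxlogx (Q n)));
    [exact Hj|exact (infinite_sum_lincomb _ _ _ _ _ _ _ HhP HhQ (fun n => eq_refl))|].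
  intros n. unfold js, js_term, mixture. field.
Qed.

(* When t = 1 every [min (P n) (Q n)] vanishes, which is what [js_term_ge]
   needs to cope with the factor [ln (1 - t)]. *)
Lemma js_sum_ge_bin_kl (t j : R) :
  tv_is P Q t -> infinite_sum js j -> bin_kl ((1 - t) / 2) (1 / 2) <= j.
Proof.
  intros Ht Hj. pose proof (tv_is_bounds t Ht) as Ht01.
  pose proof mixture_distribution_sum as Hs.
  assert (Hmin : t < 1 \/ forall n, mixture P Q n - tv_term n = 0).
  { destruct (proj2 Ht01) as [Hlt|Heq]; [now left|right].
    apply infinite_sum_nonneg_eq0.
    - intros n. pose proof (tv_term_bounds n). lra.
    - replace 0 with (1 * 1 + (-1) * t) by lra.
      apply (infinite_sum_lincomb (mixture P Q) tv_term); auto. intros n. ring. }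
  rewrite bin_kl_half.
  replace ((1 + t) / 2 * ln (1 + t) + (1 - t) / 2 * ln (1 - t))
    with ((ln (1 + t) + ln (1 - t)) / 2 * 1 + (ln (1 + t) - ln (1 - t)) / 2 * t)
    by field.
  apply (infinite_sum_le (fun n => (mixture P Q n + tv_term n) / 2 * ln (1 + t)
                                   + (mixture P Q n - tv_term n) / 2 * ln (1 - t)) js);
    [|apply (infinite_sum_lincomb (mixture P Q) tv_term); auto|exact Hj].
  - intros n. unfold js, tv_term, mixture.
    apply js_term_ge; [apply HP|apply HQ|exact Ht01|].
    destruct Hmin as [Hlt|Hz]; [now left|right]. apply Hz.
  - intros n. field.
Qed.

End Mixture.

Definition two_point (a b : R) (n : nat) : R :=
  match n with 0%nat => a | 1%nat => b | _ => 0 end.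

Lemma two_point_ge2 (a b : R) (n : nat) : (2 <= n)%nat -> two_point a b n = 0.
Proof. intros Hn. destruct n as [|[|n]]; [lia|lia|reflexivity]. Qed.

Lemma two_point_distribution (a b : R) :
  0 <= a -> 0 <= b -> a + b = 1 -> is_distribution (two_point a b).
Proof.
  intros Ha Hb Hab. split.
  - intros [|[|n]]; simpl; lra.
  - now apply infinite_sum_support2; [apply two_point_ge2|].
Qed.

Lemma two_point_entropy (a b : R) : entropy_is (two_point a b) (negxlogx a + negxlogx b).
Proof.
  apply infinite_sum_support2; [|reflexivity].
  intros n Hn. cbv beta. rewrite two_point_ge2 by exact Hn. rewrite negxlogx_eq. ring.
Qed.

Lemma two_point_swap_mixture_entropy (a b : R) :
  entropy_is (mixture (two_point a b) (two_point b a)) (2 * negxlogx ((a + b) / 2)).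
Proof.
  apply infinite_sum_support2.
  - intros n Hn. cbv beta. unfold mixture. rewrite !two_point_ge2 by exact Hn.
    rewrite negxlogx_eq. field.
  - unfold mixture. simpl. rewrite (Rplus_comm b a). ring.
Qed.

Lemma two_point_swap_tv (a b : R) :
  tv_is (two_point a b) (two_point b a) (Rabs (a - b)).
Proof.
  apply infinite_sum_support2.
  - intros n Hn. rewrite !two_point_ge2 by exact Hn. rewrite Rminus_diag, Rabs_R0. field.
  - simpl. rewrite <- (Rabs_Ropp (b - a)), Ropp_minus_distr. field.
Qed.

Lemma js_divergence_two_point_eq (e : R) : 0 <= e <= 1 ->
  2 * negxlogx (1 / 2)
  - ((negxlogx ((1 + e) / 2) + negxlogx ((1 - e) / 2))
     + (negxlogx ((1 - e) / 2) + negxlogx ((1 + e) / 2))) / 2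
  = bin_kl ((1 - e) / 2) (1 / 2).
Proof.
  intros He. rewrite bin_kl_half, !negxlogx_eq, (ln_div 1 2), ln_1 by lra.
  pose proof (mul_ln_double ((1 + e) / 2) ltac:(lra)) as Hp.
  pose proof (mul_ln_double ((1 - e) / 2) ltac:(lra)) as Hm.
  replace (2 * ((1 + e) / 2)) with (1 + e) in Hp by field.
  replace (2 * ((1 - e) / 2)) with (1 - e) in Hm by field.
  rewrite Hp, Hm. field.
Qed.

Lemma js_divergence_bin_kl_tight (eps : R) : 0 <= eps <= 1 ->
  exists (P Q : nat -> R) (hP hQ hM : R),
    is_distribution P /\ is_distribution Q /\
    entropy_is P hP /\ entropy_is Q hQ /\
    entropy_is (mixture P Q) hM /\ tv_is P Q eps /\
    hM - (hP + hQ) / 2 = bin_kl ((1 - eps) / 2) (1 / 2).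
Proof.
  intros He. set (a := (1 + eps) / 2). set (b := (1 - eps) / 2).
  exists (two_point a b), (two_point b a), (negxlogx a + negxlogx b),
    (negxlogx b + negxlogx a), (2 * negxlogx (1 / 2)).
  split; [|split; [|split; [|split; [|split; [|split]]]]].
  - apply two_point_distribution; unfold a, b; lra.
  - apply two_point_distribution; unfold a, b; lra.
  - apply two_point_entropy.
  - apply two_point_entropy.
  - replace (1 / 2) with ((a + b) / 2) by (unfold a, b; field).
    apply two_point_swap_mixture_entropy.
  - replace eps with (Rabs (a - b)).
    + apply two_point_swap_tv.
    + unfold a, b. replace ((1 + eps) / 2 - (1 - eps) / 2) with eps by field.
      now apply Rabs_pos_eq.
  - exact (js_divergence_two_point_eq eps He).
Qed.

Theorem corollary2 :
  (forall (P Q : nat -> R) (hP hQ : R),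
      is_distribution P -> is_distribution Q ->
      entropy_is P hP -> entropy_is Q hQ ->
      exists hM t,
        entropy_is (mixture P Q) hM /\ tv_is P Q t /\
        hM - (hP + hQ) / 2 >= bin_kl ((1 - t) / 2) (1 / 2))
  /\
  (forall eps : R, 0 <= eps <= 1 ->
      exists (P Q : nat -> R) (hP hQ hM : R),
        is_distribution P /\ is_distribution Q /\
        entropy_is P hP /\ entropy_is Q hQ /\
        entropy_is (mixture P Q) hM /\ tv_is P Q eps /\
        hM - (hP + hQ) / 2 = bin_kl ((1 - eps) / 2) (1 / 2)).
Proof.
  split.
  - intros P Q hP hQ HP HQ HhP HhQ.
    destruct (tv_is_exists P Q HP HQ) as [t Ht].
    destruct (js_sum_exists P Q HP HQ) as [j Hj].
    exists (j + (hP + hQ) / 2), t.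
    split; [exact (mixture_entropy_is P Q hP hQ j HhP HhQ Hj)|split; [exact Ht|]].
    pose proof (js_sum_ge_bin_kl P Q HP HQ t j Ht Hj). lra.
  - exact js_divergence_bin_kl_tight.
Qed.
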